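(* If $\mathbb W=(W,I,\preccurlyeq,\circ,{}^\sim,{}^-)$ is a DInFL-frame, then $\mathbb W\cong(\mathbb W^+)_+$ as first-order structures; more precisely, the map $x\mapsto{\uparrow}x=\{y\in W\mid x\preccurlyeq y\}$ is a bijection from $W$ onto $J^\infty(\mathbb W^+)$ such that $x\preccurlyeq y$ iff ${\uparrow}x\supseteq{\uparrow}y$, $x\in I$ iff ${\uparrow}x\subseteq I$, $z\in x\circ y$ iff ${\uparrow}z\subseteq{\uparrow}x\circ{\uparrow}y$, and ${\uparrow}(x^\sim)=({\uparrow}x)^\sim$, ${\uparrow}(x^-)=({\uparrow}x)^-$ (the latter operations being those of $(\mathbb W^+)_+$).
   Context: For a set $W$ and $\circ:W\times W\to\mathcal P(W)$, $U\circ V=\bigcup\{a\circ b\mid a\in U,b\in V\}$, $x\circ V=\{x\}\circ V$, $U\circ y=U\circ\{y\}$; $x^{\sim-}$ means $(x^\sim)^-$. A DInFL-frame is a tuple $(W,I,\preccurlyeq,\circ,{}^\sim,{}^-)$ with $I\subseteq W$, $\preccurlyeq$ a partial order, $\circ:W\times W\to\mathcal P(W)$, ${}^\sim,{}^-:W\to W$, such that for all $u,v,x,y,z$: (F1) $x\preccurlyeq y$ iff $y\in I\circ x$ iff $y\in x\circ I$; (F2) $x\preccurlyeq y$, $x\in I$ imply $y\in I$; (F3) $x\preccurlyeq y$, $x\in u\circ v$ imply $y\in u\circ v$; (F4) $(x\circ y)\circ z=x\circ(y\circ z)$; (F5) $z^\sim\in x\circ y$ iff $y^-\in z\circ x$;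 (F6) $x^{\sim-}\preccurlyeq x$ and $x^{-\sim}\preccurlyeq x$. $\mathbb W^+=(\mathsf{Up}(W,\preccurlyeq),\cap,\cup,\circ,I,\sim,-)$ with ${\sim}U=\{w\mid w^-\notin U\}$, $-U=\{w\mid w^\sim\notin U\}$; it is a complete perfect DInFL-algebra. For a complete perfect DInFL-algebra $\mathbf A$ with completely join-irreducibles $J^\infty(\mathbf A)$ and $\kappa(j)=\bigvee\{a\mid j\not\leqslant a\}$, $\mathbf A_+=(J^\infty(\mathbf A),I_1,\preccurlyeq,\circ,{}^\sim,{}^-)$ with $I_1=\{i\in J^\infty(\mathbf A)\mid i\leqslant 1\}$, $a\preccurlyeq b$ iff $b\leqslant a$, $c\in a\circ b$ iff $c\leqslant a\cdot b$, $a^\sim={\sim}\kappa(a)$, $a^-=-\kappa(a)$. *)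

Set Implicit Arguments.

Definition set (W : Type) := W -> Prop.
Definition subset {W : Type} (U V : set W) : Prop := forall w, U w -> V w.

(* A DInFL-frame on the carrier W.  [circ x y z] means z ∈ x ∘ y. *)
Record DInFLFrame (W : Type) := {
  fI : set W;
  fle : W -> W -> Prop;
  fcirc : W -> W -> W -> Prop;
  ftl : W -> W;
  fmn : W -> W;
  fle_refl : forall x, fle x x;
  fle_antisym : forall x y, fle x y -> fle y x -> x = y;
  fle_trans : forall x y z, fle x y -> fle y z -> fle x z;
  F1a : forall x y, fle x y <-> (exists i, fI i /\ fcirc i x y);
  F1b : forall x y, fle x y <-> (exists i, fI i /\ fcirc x i y);
  F2 : forall x y, fle x y -> fI x -> fI y;
  F3 : forall u v x y, fle x y -> fcirc u v x -> fcirc u v y;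
  (* F4 : (x∘y)∘z = x∘(y∘z) *)
  F4 : forall x y z w,
      (exists u, fcirc x y u /\ fcirc u z w) <-> (exists v, fcirc y z v /\ fcirc x v w);
  F5 : forall x y z, fcirc x y (ftl z) <-> fcirc z x (fmn y);
  F6a : forall x, fle (fmn (ftl x)) x;
  F6b : forall x, fle (ftl (fmn x)) x
}.

Section Complex.
Variables (W : Type) (F : DInFLFrame W).

(* Up-sets of (W, ≼): the carrier of W^+ *)
Definition Up (U : set W) : Prop := forall x y, fle F x y -> U x -> U y.

Definition upset (x : W) : set W := fun y => fle F x y.

(* operations of W^+ (lattice order is ⊆, join is union, 1 is I) *)
Definition Wp_one : set W := fI F.
Definition Wp_prod (U V : set W) : set W :=
  fun w => exists a b, U a /\ V b /\ fcirc F a b w.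
Definition Wp_tl (U : set W) : set W := fun w => ~ U (fmn F w).
Definition Wp_mn (U : set W) : set W := fun w => ~ U (ftl F w).

Definition bigjoin (S : set W -> Prop) : set W := fun w => exists V, S V /\ V w.

Definition Jinf (j : set W) : Prop :=
  Up j /\ forall S : set W -> Prop, (forall V, S V -> Up V) -> j = bigjoin S -> S j.

Definition kappa (j : set W) : set W :=
  bigjoin (fun a => Up a /\ ~ subset j a).

Definition Wpp_I (i : set W) : Prop := Jinf i /\ subset i Wp_one.
Definition Wpp_le (a b : set W) : Prop := subset b a.
Definition Wpp_circ (a b c : set W) : Prop := subset c (Wp_prod a b).
Definition Wpp_tl (a : set W) : set W := Wp_tl (kappa a).
Definition Wpp_mn (a : set W) : set W := Wp_mn (kappa a).

End Complex.

From Stdlib Require Import Classical FunctionalExtensionality PropExtensionality.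

(* Every principal up-set ↑x is completely join-irreducible, since x lies in
   one member of any family whose union is ↑x; conversely a completely
   join-irreducible up-set j is the union of the ↑x with x ∈ j, hence equal to
   one of them.  The frame axioms then transfer along ↑ directly: F3 and the
   antitonicity of ∘ in each argument (from F1 and F4) give the ternary relation, while F1 and
   F5 make ~ and - mutually inverse antitone maps, and κ(↑x) is the complement
   of the down-set of x, which yields the two involutions. *)

Lemma set_ext (W : Type) (U V : set W) : (forall w, U w <-> V w) -> U = V.
Proof.
  intro H; apply functional_extensionality; intro w.
  apply propositional_extensionality; auto.
Qed.

Section Frame.
Variables (W : Type) (F : DInFLFrame W).

Lemma le_tl_iff_le_mn y z : fle F y (ftl F z) <-> fle F z (fmn F y).
Proof.
  rewrite F1a, F1b.
  split; intros [i [Hi Hc]]; exists i; split; auto; apply F5; auto.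
Qed.

Lemma tl_mn x : ftl F (fmn F x) = x.
Proof. apply (fle_antisym F); [apply F6b | apply le_tl_iff_le_mn, fle_refl]. Qed.

Lemma mn_tl x : fmn F (ftl F x) = x.
Proof. apply (fle_antisym F); [apply F6a | apply le_tl_iff_le_mn, fle_refl]. Qed.

Lemma tl_antitone x y : fle F x y -> fle F (ftl F y) (ftl F x).
Proof. intro H; apply le_tl_iff_le_mn; rewrite mn_tl; exact H. Qed.

Lemma mn_antitone x y : fle F x y -> fle F (fmn F y) (fmn F x).
Proof. intro H; apply le_tl_iff_le_mn; rewrite tl_mn; exact H. Qed.

Lemma tl_le_iff x w : fle F (ftl F x) w <-> fle F (fmn F w) x.
Proof.
  split; intro H.
  - rewrite <- (mn_tl x); apply mn_antitone, H.
  - rewrite <- (tl_mn w); apply tl_antitone, H.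
Qed.

Lemma mn_le_iff x w : fle F (fmn F x) w <-> fle F (ftl F w) x.
Proof.
  split; intro H.
  - rewrite <- (tl_mn x); apply tl_antitone, H.
  - rewrite <- (mn_tl w); apply mn_antitone, H.
Qed.

Lemma circ_antitone_l x a b z : fle F x a -> fcirc F a b z -> fcirc F x b z.
Proof.
  intros Hxa Hc; apply F1a in Hxa; destruct Hxa as [i [Hi Hix]].
  destruct (proj1 (F4 F i x b z) (ex_intro _ a (conj Hix Hc))) as [v [Hv Hiv]].
  apply (F3 F x b v z); auto; apply F1a; eauto.
Qed.

Lemma circ_antitone_r x y b z : fle F y b -> fcirc F x b z -> fcirc F x y z.
Proof.
  intros Hyb Hc; apply F1b in Hyb; destruct Hyb as [i [Hi Hyi]].
  destruct (proj2 (F4 F x y i z) (ex_intro _ b (conj Hyi Hc))) as [u [Hu Hui]].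
  apply (F3 F x y u z); auto; apply F1b; eauto.
Qed.

Lemma upset_Up x : Up F (upset F x).
Proof. intros a b Hab Ha; eapply fle_trans; eauto. Qed.

Lemma upset_Jinf x : Jinf F (upset F x).
Proof.
  split; [apply upset_Up |]; intros S HS Heq.
  assert (Hx : bigjoin S x) by (rewrite <- Heq; apply fle_refl).
  destruct Hx as [V [SV Vx]].
  replace (upset F x) with V; auto.
  apply set_ext; intro w; split.
  - intro Vw; rewrite Heq; exists V; auto.
  - intro Hw; apply (HS V SV x w); auto.
Qed.

Lemma upset_inj x y : upset F x = upset F y -> x = y.
Proof.
  intro H; apply (fle_antisym F).
  - change (upset F x y); rewrite H; apply fle_refl.
  - change (upset F y x); rewrite <- H; apply fle_refl.
Qed.

Lemma Jinf_upset j : Jinf F j -> exists x, upset F x = j.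
Proof.
  intros [Uj Hj].
  destruct (Hj (fun V => exists x, j x /\ V = upset F x)) as [x [_ Hx]].
  - intros V [x [_ ->]]; apply upset_Up.
  - apply set_ext; intro w; split.
    + intro jw; exists (upset F w); split; [eauto | apply fle_refl].
    + intros [V [[x [jx ->]] Hxw]]; apply (Uj x w); auto.
  - exists x; auto.
Qed.

Lemma le_iff_upset_supset x y : fle F x y <-> subset (upset F y) (upset F x).
Proof.
  split.
  - intros H w Hw; eapply fle_trans; eauto.
  - intro H; apply H, fle_refl.
Qed.

Lemma I_iff_upset_sub_I x : fI F x <-> subset (upset F x) (fI F).
Proof.
  split.
  - intros H w Hw; eapply F2; eauto.
  - intro H; apply H, fle_refl.
Qed.

Lemma circ_iff_upset_sub_prod x y z :
  fcirc F x y z <-> subset (upset F z) (Wp_prod F (upset F x) (upset F y)).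
Proof.
  split.
  - intros H w Hw; exists x, y; repeat split; try apply fle_refl; eapply F3; eauto.
  - intro H; destruct (H z (fle_refl F z)) as [a [b [Ha [Hb Hc]]]].
    eapply circ_antitone_r; eauto; eapply circ_antitone_l; eauto.
Qed.

Lemma kappa_upset x w : kappa F (upset F x) w <-> ~ fle F w x.
Proof.
  split.
  - intros [a [[Ua Nsub] aw]] Hwx; apply Nsub; intros v Hv.
    apply (Ua w v); [eapply fle_trans; eauto | auto].
  - intro H; exists (fun u => ~ fle F u x); split; [split | auto].
    + intros u v Huv Hu Hv; apply Hu; eapply fle_trans; eauto.
    + intro Hsub; apply (Hsub x (fle_refl F x)), fle_refl.
Qed.

Lemma upset_tl x : upset F (ftl F x) = Wpp_tl F (upset F x).
Proof.
  apply set_ext; intro w; unfold Wpp_tl, Wp_tl, upset.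
  rewrite kappa_upset, tl_le_iff; split; [tauto | apply NNPP].
Qed.

Lemma upset_mn x : upset F (fmn F x) = Wpp_mn F (upset F x).
Proof.
  apply set_ext; intro w; unfold Wpp_mn, Wp_mn, upset.
  rewrite kappa_upset, mn_le_iff; split; [tauto | apply NNPP].
Qed.

End Frame.

Theorem mainTheorem7 (W : Type) (F : DInFLFrame W) :
  (* ↑ maps W into J^∞(W^+) *)
  (forall x, Jinf F (upset F x)) /\
  (* injective *)
  (forall x y, upset F x = upset F y -> x = y) /\
  (* onto J^∞(W^+) *)
  (forall j, Jinf F j -> exists x, upset F x = j) /\
  (* order *)
  (forall x y, fle F x y <-> Wpp_le (upset F x) (upset F y)) /\
  (* identity *)
  (forall x, fI F x <-> Wpp_I F (upset F x)) /\
  (* ternary relation *)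
  (forall x y z, fcirc F x y z <-> Wpp_circ F (upset F x) (upset F y) (upset F z)) /\
  (* involutions *)
  (forall x, upset F (ftl F x) = Wpp_tl F (upset F x)) /\
  (forall x, upset F (fmn F x) = Wpp_mn F (upset F x)).
Proof.
  refine (conj (upset_Jinf W F) (conj (upset_inj W F) (conj (Jinf_upset W F)
    (conj (le_iff_upset_supset W F) (conj _ (conj (circ_iff_upset_sub_prod W F)
    (conj (upset_tl W F) (upset_mn W F)))))))).
  intro x; rewrite I_iff_upset_sub_I; unfold Wpp_I.
  split; [intro Hsub; split; [apply upset_Jinf | exact Hsub] | intros [_ Hsub]; exact Hsub].
Qed.
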